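(* Let $(D,T,k)$ be an instance, $\alpha\ge 1$ a real number, and $\sigma=(v_1,\dots,v_n)$ a regular order of $V(D)$ with $\mathrm{cost}(\sigma)\le\alpha k$, such that $(D,T,k)$ is reduced with respect to $\sigma$. Let $t\in T$ and let $e$ be an affected arc above $t$ with span $[v_l,v_r]$. Then, with $\ell=2(\alpha+1)k+2$, we have $t=v_i$ for some $i$ with $l\le i\le l+\ell$ or $r-\ell\le i\le r$.
   Context: $D$ is a tournament, $T\subseteq V(D)$ is the terminal set, $k$ a positive integer. For an order $\sigma=(v_1,\dots,v_n)$: $[v_l,v_r]=\{v_i:l\le i\le r\}$; an arc $v_iv_j$ is forward if $i<j$, backward if $i>j$; the span of backward arc $v_rv_l$ is $[v_l,v_r]$, and it is above each vertex of its span; a backward arc above a terminal is affected; $\mathrm{cost}(\sigma)$ is the number of affected arcs. A non-terminal interval is an interval with no terminal. $N^+_X(v)=\{u\in X:vu\in A(D)\}$, $N^-_X(v)=\{u\in X:uv\in A(D)\}$. $\sigma$ is regular if for every non-terminal interval $I=[v_l,v_r]$, $|N^+_I(v_l)|\ge\lceil(r-l)/2\rceil$ and $|N^-_I(v_r)|\ge\lceil(r-l)/2\rceil$. A $T$-cycle is a directed cycle containing a terminal. The instance is reduced with respect to $\sigma$ if: $k\ge 1$; $D$ contains a $T$-cycle; every vertex of $D$ lies on some $T$-cycle; and there is no affected arc $uv$ above a terminal $t$ for which there exist $k+1$ pairwise arc-disjoint directed paths from $v$ to $u$ each containing $t$ and consisting only of forward arcs. *)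

From HB Require Import structures.
From mathcomp Require Import all_boot all_order all_algebra.
From mathcomp Require Import reals.
Set Implicit Arguments. Unset Strict Implicit. Unset Printing Implicit Defensive.

(* A digraph on a finite vertex type V is an arc relation
   A : rel V (A x y means the arc xy exists).  An order sigma = (v_1,...,v_n)
   of V(D) is a duplicate-free sequence s containing every vertex; the
   position of v in sigma is index v s (0-based). *)

Section Defs.
Variable V : finType.

Definition tournament (A : rel V) : Prop :=
  (forall x, ~~ A x x) /\ (forall x y, x != y -> A x y = ~~ A y x).

Definition is_order (s : seq V) : Prop := uniq s /\ (forall v, v \in s).

Definition pos (s : seq V) (v : V) : nat := index v s.

Definition backward (A : rel V) (s : seq V) (u v : V) : bool :=
  A u v && (pos s v < pos s u).

Definition above (s : seq V) (u v w : V) : bool :=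
  (pos s v <= pos s w) && (pos s w <= pos s u).

Definition affected (A : rel V) (s : seq V) (T : {set V}) (u v : V) : bool :=
  backward A s u v && [exists w in T, above s u v w].

Definition cost (A : rel V) (s : seq V) (T : {set V}) : nat :=
  #|[set p : V * V | affected A s T p.1 p.2]|.

Definition interval (s : seq V) (a b : V) : {set V} :=
  [set x | (pos s a <= pos s x) && (pos s x <= pos s b)].

(* sigma is regular: for every non-terminal interval I = [v_l, v_r],
   |N^+_I(v_l)| >= ceil((r-l)/2) and |N^-_I(v_r)| >= ceil((r-l)/2);
   note ceil(m/2) = (m+1)./2 for m : nat. *)
Definition regular (A : rel V) (s : seq V) (T : {set V}) : Prop :=
  forall a b : V, pos s a <= pos s b ->
    [disjoint T & interval s a b] ->
    ((pos s b - pos s a).+1./2 <= #|[set x in interval s a b | A a x]|) /\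
    ((pos s b - pos s a).+1./2 <= #|[set x in interval s a b | A x b]|).

Definition T_cycle (A : rel V) (T : {set V}) (c : seq V) : bool :=
  [&& c != [::], uniq c, cycle A c & has (fun x => x \in T) c].

Definition fwd_path (A : rel V) (s : seq V) (v : V) (p : seq V) (u : V) : bool :=
  path (fun a b => A a b && (pos s a < pos s b)) v p && (last v p == u).

Definition path_arcs (v : V) (p : seq V) : seq (V * V) := zip (v :: p) p.

Definition reduced (A : rel V) (T : {set V}) (k : nat) (s : seq V) : Prop :=
  [/\ 1 <= k,
      exists c, T_cycle A T c,
      (forall x, exists c, T_cycle A T c /\ x \in c) &
      (forall u v t, affected A s T u v -> t \in T -> above s u v t ->
         ~ exists P : 'I_k.+1 -> seq V,
             (forall i, fwd_path A s v (P i) u /\ t \in v :: P i) /\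
             (forall i j, i != j -> forall e,
                  e \in path_arcs v (P i) -> e \notin path_arcs v (P j)))].

End Defs.

(* If the terminal t were far from both ends of the span [v, u] of the affected
   arc uv, then many vertices x between v and t would give forward paths
   v -> x -> t: every other such x either yields an affected arc (tx, or xv over
   a terminal), or is a non-out-neighbour of v in the terminal-free stretch
   after v, and regularity makes at most half of that stretch such vertices.
   So at least ((i - l - 1) - 2 cost) / 2 > k vertices x qualify, and, reversing
   the order and all arcs, more than k vertices y give forward paths
   t -> y -> u.  The paths v x t y u built from k + 1 such x and k + 1 such y
   are arc-disjoint and pass through t, contradicting reducedness. *)

From Pilot Require Import Defs.
From HB Require Import structures.
From mathcomp Require Import all_boot all_order all_algebra.
From mathcomp Require Import reals.
From mathcomp Require Import zify lra.
Import Order.TTheory GRing.Theory Num.Theory.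
Set Implicit Arguments. Unset Strict Implicit. Unset Printing Implicit Defensive.

Section Positions.
Variable V : finType.
Implicit Types (s : seq V) (x : V).

Lemma pos_ltn_size s x : is_order s -> pos s x < size s.
Proof. by case=> _ sx; rewrite /pos index_mem. Qed.

Lemma card_pos_lt s p : is_order s -> #|[set x | pos s x < p]| = minn p (size s).
Proof.
case=> uniq_s sx; have -> : [set x | pos s x < p] = [set x in take p s].
  by apply/setP=> x; rewrite !inE in_take.
by rewrite cardsE (card_uniqP _) ?take_uniq // size_take_min.
Qed.

Lemma card_pos_range s a b : is_order s -> b <= size s ->
  #|[set x | a <= pos s x < b]| = b - a.
Proof.
move=> ords b_le.
have -> : [set x | a <= pos s x < b] = [set x | pos s x < b] :\: [set x | pos s x < a].
  by apply/setP=> x; rewrite !inE -leqNgt andbC.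
rewrite cardsD; have -> : [set x | pos s x < b] :&: [set x | pos s x < a] = [set x | pos s x < minn a b].
  by apply/setP=> x; rewrite !inE leq_min andbC.
rewrite !card_pos_lt //; lia.
Qed.

Lemma pos_rev s x : is_order s -> pos (rev s) x = size s - (pos s x).+1.
Proof.
move=> ords; have := pos_ltn_size x ords; case: ords => uniq_s sx.
(* [set n := size s] merges the two syntactically different copies of [size s]
   (over the eqType and over the finType) into one atom for [lia]. *)
rewrite /pos => x_lt; have nth_x : nth x (rev s) (size s - (index x s).+1) = x.
  rewrite nth_rev; set n := size s; last by lia.
  by rewrite (_ : n - _ = index x s) ?nth_index //; lia.
by rewrite -{1}nth_x index_uniq ?rev_uniq // size_rev; set n := size s; lia.
Qed.

Lemma is_order_rev s : is_order s -> is_order (rev s).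
Proof. by case=> uniq_s sx; split=> [|x]; rewrite ?rev_uniq ?mem_rev. Qed.

End Positions.

Definition between (V : finType) (s : seq V) (a b : V) : {set V} :=
  [set x | pos s a < pos s x < pos s b].

Definition fwd_midpoints (V : finType) (A : rel V) (s : seq V) (a b : V) : {set V} :=
  [set x in between s a b | A a x && A x b].

Lemma card_between (V : finType) (s : seq V) (a b : V) : is_order s ->
  #|between s a b| = pos s b - (pos s a).+1.
Proof. by move=> ords; rewrite card_pos_range // ltnW // pos_ltn_size. Qed.

Lemma card_interval (V : finType) (s : seq V) (a b : V) : is_order s ->
  #|Defs.interval s a b| = (pos s b).+1 - pos s a.
Proof.
move=> ords; have -> : Defs.interval s a b = [set x | pos s a <= pos s x < (pos s b).+1].
  by apply/setP=> x; rewrite !inE ltnS.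
by rewrite card_pos_range // pos_ltn_size.
Qed.

Lemma tournament_flip (V : finType) (A : rel V) (x y : V) :
  tournament A -> x != y -> ~~ A x y -> A y x.
Proof. by case=> _ tourA neq_xy; rewrite (tourA _ _ neq_xy) negbK. Qed.

Lemma affected_over_terminal (V : finType) (A : rel V) (s : seq V) (T : {set V})
    (u v w : V) :
  A u v -> pos s v < pos s u -> w \in T -> pos s v <= pos s w <= pos s u ->
  affected A s T u v.
Proof.
by move=> Auv vu wT vwu; rewrite /affected /backward Auv vu; apply/exists_inP; exists w.
Qed.

Section LeftCount.
Variables (V : finType) (A : rel V) (s : seq V) (T : {set V}).
Hypotheses (tourA : tournament A) (ords : is_order s) (regs : regular A s T).

Lemma regular_non_out_neighbours (a b : V) :
  pos s a <= pos s b -> [disjoint T & Defs.interval s a b] ->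
  2 * #|[set x | pos s a < pos s x <= pos s b & ~~ A a x]| <= pos s b - pos s a.
Proof.
move=> ab free_ab; have [out_big _] := regs ab free_ab.
set Out := [set x in Defs.interval s a b | A a x] in out_big.
set Non := [set x | _ & _].
have a_I : a \in Defs.interval s a b by rewrite inE leqnn.
have Out_sub : Out \subset Defs.interval s a b :\ a.
  apply/subsetP=> x; rewrite !inE => /andP[-> Aax]; rewrite andbT.
  by apply: contraTneq Aax => ->; case: tourA => ->.
have Non_sub : Non \subset (Defs.interval s a b :\ a) :\: Out.
  apply/subsetP=> x; rewrite !inE => /andP[/andP[ax xb] nAax].
  rewrite (negbTE nAax) andbF xb (ltnW ax) !andbT.
  by apply: contraTneq ax => ->; rewrite ltnn.
have card_Ia : #|Defs.interval s a b :\ a| = pos s b - pos s a.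
  by have := cardsD1 a (Defs.interval s a b); rewrite a_I card_interval //; lia.
have := subset_leq_card Non_sub; rewrite cardsD (setIidPr Out_sub) card_Ia.
move: out_big; rewrite -uphalfE leq_uphalf_double -mul2n; lia.
Qed.

Variables (v t : V).

Let terminal_from_v (x : V) := [exists w in T, pos s v <= pos s w <= pos s x].

Let costly :=
  [set x in between s v t | ~~ A x t || ~~ A v x && terminal_from_v x].

Let free := [set x in between s v t | ~~ A v x && ~~ terminal_from_v x].

Lemma between_subset : between s v t \subset fwd_midpoints A s v t :|: costly :|: free.
Proof.
apply/subsetP=> x; rewrite !inE => x_vt; rewrite x_vt /=.
by case: (A v x); case: (A x t); case: (terminal_from_v x).
Qed.

Lemma card_costly : t \in T -> #|costly| <= cost A s T.
Proof.
move=> tT; pose arc x := if A x t then (x, v) else (t, x).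
have arc_inj : {in costly &, injective arc}.
  move=> x y; rewrite !inE /arc => /andP[/andP[_ xt] _] /andP[/andP[_ yt] _].
  by case: (A x t); case: (A y t) => -[] // eq_x eq_y;
    rewrite ?eq_x ?eq_y ltnn in xt yt.
rewrite -(card_in_imset arc_inj); apply: subset_leq_card.
apply/subsetP=> _ /imsetP[x + ->]; rewrite !inE /arc => /andP[/andP[vx xt]].
case: ifP => [Axt | /negbT nAxt] /=.
- move=> /andP[nAvx /exists_inP[w wT /andP[vw wx]]].
  have neq_vx : v != x by apply: contraTneq vx => ->; rewrite ltnn.
  apply: (affected_over_terminal _ vx wT); first exact: tournament_flip.
  by rewrite vw wx.
- move=> _; have neq_xt : x != t by apply: contraTneq xt => ->; rewrite ltnn.
  apply: (affected_over_terminal _ xt tT); first exact: tournament_flip.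
  by rewrite leqnn ltnW.
Qed.

Lemma card_free : 2 * #|free| <= #|between s v t|.
Proof.
case: (set_0Vmem free) => [-> | [x0 x0_free]]; first by rewrite cards0.
case: (arg_maxnP (pos s) x0_free) => b b_free b_max.
have /[!inE] /andP[/andP[vb bt] /andP[_ no_terminal]] : b \in free := b_free.
have free_vb : [disjoint T & Defs.interval s v b].
  apply/pred0P=> w /=; apply: contraNF no_terminal => /andP[wT wvb].
  by apply/exists_inP; exists w => //; move: wvb; rewrite inE.
have free_sub : free \subset [set x | pos s v < pos s x <= pos s b & ~~ A v x].
  apply/subsetP=> x x_free; have xb : pos s x <= pos s b := b_max x x_free.
  rewrite inE xb.
  by move: x_free; rewrite !inE => /andP[/andP[-> _] /andP[-> _]].
have := regular_non_out_neighbours (ltnW vb) free_vb.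
have := subset_leq_card free_sub.
rewrite card_between //; lia.
Qed.

Lemma card_between_le_to_terminal : t \in T ->
  #|between s v t| <= 2 * #|fwd_midpoints A s v t| + 2 * cost A s T.
Proof.
move=> tT; have := subset_leq_card between_subset.
have := (leq_card_setU (fwd_midpoints A s v t :|: costly) free).1.
have := (leq_card_setU (fwd_midpoints A s v t) costly).1.
have := card_costly tT; have := card_free; lia.
Qed.

End LeftCount.

Definition converse_rel (V : finType) (A : rel V) : rel V := fun x y => A y x.

Section Reversal.
Variables (V : finType) (A : rel V) (s : seq V) (T : {set V}).
Hypothesis ords : is_order s.

Lemma tournament_converse : tournament A -> tournament (converse_rel A).
Proof.
case=> irrA tourA; split=> [x | x y neq_xy]; first exact: irrA.
by rewrite /converse_rel tourA // eq_sym.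
Qed.

Lemma rev_pos_leq (x y : V) : (pos (rev s) x <= pos (rev s) y) = (pos s y <= pos s x).
Proof.
rewrite !pos_rev //; have := pos_ltn_size x ords; have := pos_ltn_size y ords.
set n := size s; lia.
Qed.

Lemma rev_pos_ltn (x y : V) : (pos (rev s) x < pos (rev s) y) = (pos s y < pos s x).
Proof. by rewrite !ltnNge rev_pos_leq. Qed.

Lemma interval_rev (a b : V) : Defs.interval (rev s) a b = Defs.interval s b a.
Proof. by apply/setP=> x; rewrite !inE !rev_pos_leq andbC. Qed.

Lemma between_rev (a b : V) : between (rev s) a b = between s b a.
Proof. by apply/setP=> x; rewrite !inE !rev_pos_ltn andbC. Qed.

Lemma fwd_midpoints_rev (a b : V) :
  fwd_midpoints (converse_rel A) (rev s) a b = fwd_midpoints A s b a.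
Proof.
apply/setP=> x; rewrite !inE !rev_pos_ltn /converse_rel.
by rewrite [A x a && _]andbC [_ < _ < pos s a]andbC.
Qed.

Lemma regular_rev : regular A s T -> regular (converse_rel A) (rev s) T.
Proof.
move=> regs a b; rewrite rev_pos_leq interval_rev => ba free_ba.
have [out_b in_a] := regs b a ba free_ba.
have -> : pos (rev s) b - pos (rev s) a = pos s a - pos s b.
  rewrite !pos_rev //; have := pos_ltn_size a ords; have := pos_ltn_size b ords.
  set n := size s; lia.
by split.
Qed.

Lemma cost_rev : cost (converse_rel A) (rev s) T = cost A s T.
Proof.
have swap_inj : injective (fun p : V * V => (p.2, p.1)) by move=> [? ?] [? ?] [-> ->].
rewrite /cost -[RHS](card_preimset _ swap_inj); apply: eq_card => -[x y].
rewrite !inE /affected /backward /above /converse_rel /= rev_pos_ltn.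
congr (_ && _); apply: eq_existsb => w; congr (_ && _).
by rewrite !rev_pos_leq andbC.
Qed.

End Reversal.

Lemma card_between_le_from_terminal (V : finType) (A : rel V) (s : seq V)
    (T : {set V}) (t u : V) :
  tournament A -> is_order s -> regular A s T -> t \in T ->
  #|between s t u| <= 2 * #|fwd_midpoints A s t u| + 2 * cost A s T.
Proof.
move=> tourA ords regs tT.
have := card_between_le_to_terminal (tournament_converse tourA) (is_order_rev ords)
  (regular_rev ords regs) u tT.
by rewrite between_rev // fwd_midpoints_rev // cost_rev.
Qed.

Lemma path_arcs_through_disjoint (V : finType) (s : seq V) (v t u x x' y y' : V) :
  x \in between s v t -> x' \in between s v t ->
  y \in between s t u -> y' \in between s t u -> x != x' -> y != y' ->
  forall e, e \in path_arcs v [:: x; t; y; u] -> e \notin path_arcs v [:: x'; t; y'; u].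
Proof.
rewrite !inE => /andP[vx xt] /andP[vx' x't] /andP[ty yu] /andP[ty' y'u] neq_x neq_y e.
rewrite /path_arcs /= !inE; case/or4P=> /eqP ->; rewrite !xpair_eqE; apply/negP;
  case/or4P=> /andP[/eqP eq1 /eqP eq2]; subst; rewrite ?eqxx in neq_x neq_y; lia.
Qed.

Lemma arc_disjoint_paths_through (V : finType) (A : rel V) (s : seq V) (k : nat)
    (v t u : V) :
  k < #|fwd_midpoints A s v t| -> k < #|fwd_midpoints A s t u| ->
  exists P : 'I_k.+1 -> seq V,
    (forall i, fwd_path A s v (P i) u /\ t \in v :: P i) /\
    (forall i j, i != j -> forall e,
        e \in path_arcs v (P i) -> e \notin path_arcs v (P j)).
Proof.
move=> many_vt many_tu.
pose x i := enum_val (widen_ord many_vt i).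
pose y i := enum_val (widen_ord many_tu i).
have x_inj : injective x by move=> i j /enum_val_inj/(congr1 val)/= /val_inj.
have y_inj : injective y by move=> i j /enum_val_inj/(congr1 val)/= /val_inj.
have x_mid i : x i \in fwd_midpoints A s v t := enum_valP _.
have y_mid i : y i \in fwd_midpoints A s t u := enum_valP _.
exists (fun i => [:: x i; t; y i; u]); split=> [i | i j neq_ij].
  move: (x_mid i) (y_mid i); rewrite !inE => /and3P[/andP[vx xt] Avx Axt].
  move=> /and3P[/andP[ty yu] Aty Ayu].
  split; first by rewrite /fwd_path /= vx xt ty yu Avx Axt Aty Ayu eqxx.
  by rewrite eqxx /= !orbT.
move=> e; apply: (path_arcs_through_disjoint (s := s)).
- by move: (x_mid i); rewrite inE => /andP[].
- by move: (x_mid j); rewrite inE => /andP[].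
- by move: (y_mid i); rewrite inE => /andP[].
- by move: (y_mid j); rewrite inE => /andP[].
- by rewrite (inj_eq x_inj).
- by rewrite (inj_eq y_inj).
Qed.

Unset Implicit Arguments. Set Strict Implicit. Set Printing Implicit Defensive.
Local Open Scope ring_scope.

Lemma ltn_of_gap (R : realType) (alpha : R) (k c g a b : nat) :
  c%:R <= alpha * k%:R -> (b <= 2 * g + 2 * c + a.+1)%N ->
  2 * (alpha + 1) * k%:R + 2 < b%:R - a%:R -> (k < g)%N.
Proof.
move=> cost_le; rewrite -(ler_nat R) -[a.+1]addn1 !natrD => b_le gap.
by rewrite ltnNge -(ler_nat R); apply/negP => g_le; lra.
Qed.

Theorem lemma3 (R : realType) (V : finType) (A : rel V) (T : {set V})
    (k : nat) (alpha : R) (s : seq V) :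
  tournament A -> is_order s -> 1 <= alpha ->
  regular A s T -> ((cost A s T)%:R <= alpha * k%:R :> R) ->
  reduced A T k s ->
  forall t u v : V, t \in T -> affected A s T u v -> above s u v t ->
  let l := pos s v in let r := pos s u in let i := pos s t in
  let ell := 2 * (alpha + 1) * k%:R + 2 in
  ((l%:R <= i%:R :> R) && (i%:R <= l%:R + ell)) \/
  ((r%:R - ell <= i%:R) && (i%:R <= r%:R :> R)).
Proof.
move=> tourA ords _ regs cost_le [_ _ _ no_paths] t u v tT aff_uv t_above l r i ell.
have /andP[li ir] := t_above; rewrite !ler_nat li ir /=.
have [near_l | far_l] := lerP i%:R (l%:R + ell); first by left.
have [near_r | far_r] := lerP (r%:R - ell) i%:R; first by right.
exfalso; apply: (no_paths u v t aff_uv tT t_above).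
apply: arc_disjoint_paths_through.
- apply: (@ltn_of_gap R alpha k _ _ l i cost_le); last by rewrite /ell in far_l; lra.
  have := card_between_le_to_terminal tourA ords regs v tT.
  by rewrite card_between //; lia.
- apply: (@ltn_of_gap R alpha k _ _ i r cost_le); last by rewrite /ell in far_r; lra.
  have := card_between_le_from_terminal u tourA ords regs tT.
  by rewrite card_between //; lia.
Qed.
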